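(* Let $K$ be a valued field with valuation $v_K:K\to\mathbb{T}$, let $M$ be a commutative monoid, and let $I\subseteq K[M]$ be an ideal containing no element of $M$. Let $A$ be the tropicalization of $K[M]/I$, i.e. the quotient of $\mathbb{T}[M]$ by the congruence generated by the bend relations of elements of $I$. Then $A$ has no nontrivial zero-divisors; in particular $A$ is irreducible.
   Context: $\mathbb{T}=\mathbb{R}\cup\{-\infty\}$ with addition $\max$ and multiplication the usual addition, $0_{\mathbb{T}}=-\infty$; $v_K(a)=-\infty$ iff $a=0$. For $f=\sum_i a_i[m_i]\in I$ with the $a_i\neq0$ and distinct $m_i\in M$, the bend relations of $f$ are, for each index $i$, $\sum_j v_K(a_j)[m_j]\sim\sum_{j\neq i}v_K(a_j)[m_j]$ in $\mathbb{T}[M]$. A semiring is irreducible if whenever $xy$ is nilpotent, $x$ or $y$ is nilpotent. *)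

From HB Require Import structures.
From mathcomp Require Import all_boot all_order all_algebra.
From mathcomp Require Import finmap.
From mathcomp Require Import Rstruct.
From Stdlib Require Reals.
Import Order.TTheory Num.Theory.
Notation R := Rdefinitions.R.

Set Implicit Arguments.
Unset Strict Implicit.
Unset Printing Implicit Defensive.

Import GRing.Theory.
Local Open Scope fset_scope.

(* The tropical semifield  T = R u {-oo}  (None = -oo = 0_T).          *)
Definition trop := option R.

Definition tadd (a b : trop) : trop :=
  match a, b with
  | None, _ => b
  | _, None => a
  | Some x, Some y => Some (Num.max x y)
  end.

Definition tmul (a b : trop) : trop :=
  match a, b with
  | Some x, Some y => Some (x + y)%R
  | _, _ => None
  end.

Definition tle (a b : trop) : Prop :=
  match a, b with
  | None, _ => True
  | Some _, None => False
  | Some x, Some y => (x <= y)%R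
  end.

(* A valuation v_K : K -> T (max convention). *)
Definition valuation (K : fieldType) (v : K -> trop) : Prop :=
  [/\ (forall a : K, v a = None <-> a = 0%R),
      (forall a b : K, v (a * b)%R = tmul (v a) (v b)) &
      (forall a b : K, tle (v (a + b)%R) (tadd (v a) (v b)))].

Section MonoidAlgebras.
Variables (M : choiceType) (e : M) (op : Monoid.com_law e).

Section KM.
Variable K : fieldType.

Definition KM := {fsfun M -> K with 0%R}.

Definition km0 : KM := [fsfun with 0%R].

Definition kmadd (f g : KM) : KM :=
  [fsfun m in finsupp f `|` finsupp g => (f m + g m)%R].

Definition kmmul (f g : KM) : KM :=
  [fsfun m in [fset op x y | x in finsupp f, y in finsupp g] =>
     (\sum_(x <- finsupp f) \sum_(y <- finsupp g | op x y == m) f x * g y)%R].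

Definition kmono (m : M) : KM := [fsfun x in [fset m] => 1%R].

Definition km_ideal (I : KM -> Prop) : Prop :=
  [/\ I km0,
      (forall f g, I f -> I g -> I (kmadd f g)) &
      (forall f g, I g -> I (kmmul f g))].

(* Tropicalization of f = sum_i a_i [m_i]  (a_i <> 0, m_i distinct):
   sum_i v(a_i) [m_i] in T[M]; the m_i are exactly finsupp f. *)
Definition tropf (v : K -> trop) (f : KM) : {fsfun M -> trop with None} :=
  [fsfun m in finsupp f => v (f m)].

Definition tropf_without (v : K -> trop) (f : KM) (i : M)
  : {fsfun M -> trop with None} :=
  [fsfun m in finsupp f `\ i => v (f m)].
End KM.

Definition TM := {fsfun M -> trop with None}.

Definition tm0 : TM := [fsfun with None].

Definition tm1 : TM := [fsfun x in [fset e] => Some (0 : R)%R].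

Definition tmadd (f g : TM) : TM :=
  [fsfun m in finsupp f `|` finsupp g => tadd (f m) (g m)].

Definition tmmul (f g : TM) : TM :=
  [fsfun m in [fset op x y | x in finsupp f, y in finsupp g] =>
     \big[tadd/None]_(x <- finsupp f)
        \big[tadd/None]_(y <- finsupp g | op x y == m) tmul (f x) (g y)].

Definition tmexp (f : TM) (n : nat) : TM := iter n (tmmul f) tm1.

Definition bend_rel (K : fieldType) (v : K -> trop) (I : KM K -> Prop)
  (p q : TM) : Prop :=
  exists f : KM K, exists i : M,
    [/\ I f, i \in finsupp f, p = tropf v f & q = tropf_without v f i].

Inductive cong_gen (R0 : TM -> TM -> Prop) : TM -> TM -> Prop :=
| cg_base p q : R0 p q -> cong_gen R0 p q
| cg_refl p : cong_gen R0 p p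
| cg_sym p q : cong_gen R0 p q -> cong_gen R0 q p
| cg_trans p q r : cong_gen R0 p q -> cong_gen R0 q r -> cong_gen R0 p r
| cg_add p q r s : cong_gen R0 p q -> cong_gen R0 r s ->
    cong_gen R0 (tmadd p r) (tmadd q s)
| cg_mul p q r s : cong_gen R0 p q -> cong_gen R0 r s ->
    cong_gen R0 (tmmul p r) (tmmul q s).

(* Equality in A = T[M] / (congruence generated by bend relations of I):
   two elements of T[M] are identified in A iff they are related. *)
Definition trop_eq (K : fieldType) (v : K -> trop) (I : KM K -> Prop) :
  TM -> TM -> Prop := cong_gen (bend_rel v I).

End MonoidAlgebras.

(* The class of 0 in A is {0}.  Indeed T[M] has no zero-divisors, since a
   tropical sum (a max) of finite terms is never -oo, so "being 0" is
   compatible with + and *.  Every bend relation relates two nonzero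
   elements: trop(f) is nonzero for f <> 0, and if trop(f) with the term at
   m_i removed were 0, then f = a [m_i] would be a monomial, and
   a^-1 [e] * f = [m_i] would lie in I.  Hence the generated congruence
   never identifies a nonzero element with 0, and a product (or a power of a
   product) can only be related to 0 if one factor is 0 in T[M]. *)

From HB Require Import structures.
From mathcomp Require Import all_boot all_order all_algebra.
From mathcomp Require Import finmap.

Import GRing.Theory.
Set Implicit Arguments.
Unset Strict Implicit.
Unset Printing Implicit Defensive.
Local Open Scope fset_scope.

Lemma tadd_eqNone (a b : trop) : tadd a b = None <-> a = None /\ b = None.
Proof. by case: a => [a|]; case: b => [b|]; split=> //= -[]. Qed.

Lemma tmul_eqNone (a b : trop) : tmul a b = None <-> a = None \/ b = None.
Proof. by case: a => [a|]; case: b => [b|]; split=> //=; intuition discriminate. Qed.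

Lemma big_tadd_eqNone (I : eqType) (s : seq I) (P : pred I) (F : I -> trop) :
  \big[tadd/None]_(i <- s | P i) F i = None <->
  (forall i, i \in s -> P i -> F i = None).
Proof.
elim: s => [|a s IHs]; first by rewrite big_nil.
rewrite big_cons; split.
- move=> Hsum i; rewrite inE => /orP[/eqP-> Pa|i_s Pi].
    by move: Hsum; rewrite Pa => /tadd_eqNone[].
  by apply: (proj1 IHs) i_s Pi; move: Hsum; case: (P a) => // /tadd_eqNone[].
- move=> HF; have Hs : \big[tadd/None]_(i <- s | P i) F i = None.
    by apply/IHs => i i_s; apply: HF; rewrite inE i_s orbT.
  by case: ifP => Pa; rewrite Hs //; apply/tadd_eqNone; rewrite HF ?mem_head.
Qed.

Section TropicalMonoidSemiring.
Variables (M : choiceType) (e : M) (op : Monoid.com_law e).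

Lemma tm0E (m : M) : tm0 M m = None.
Proof. by rewrite fsfunE. Qed.

Lemma tm_eq0P (p : TM M) : p = tm0 M <-> forall m, p m = None.
Proof.
split=> [-> m|Hp]; first exact: tm0E.
by apply/fsfunP => m; rewrite Hp tm0E.
Qed.

Lemma tm_neq0P (p : TM M) : p <> tm0 M <-> exists2 m, m \in finsupp p & p m <> None.
Proof.
rewrite tm_eq0P; split=> [Hp|[m _ Hm /(_ m)//]].
case: (finsupp p =P fset0) => [p_supp0|/eqP/fset0Pn[m m_supp]].
  by case: Hp => m; apply/eqP; rewrite -[_ == _]negbK -mem_finsupp p_supp0.
by exists m => //; apply/eqP; rewrite -mem_finsupp.
Qed.

Lemma tmaddE (p q : TM M) (m : M) : tmadd p q m = tadd (p m) (q m).
Proof.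
rewrite fsfunE inE !mem_finsupp.
by case: (eqVneq (p m) None) => [->|]; case: (eqVneq (q m) None) => [->|].
Qed.

Lemma tmadd_eq0 (p q : TM M) : tmadd p q = tm0 M <-> p = tm0 M /\ q = tm0 M.
Proof.
rewrite !tm_eq0P; split=> [Hpq|[Hp Hq] m]; last by rewrite tmaddE Hp Hq.
by split=> m; have := Hpq m; rewrite tmaddE => /tadd_eqNone[].
Qed.

Lemma tmmul_eq0 (p q : TM M) : tmmul op p q = tm0 M <-> p = tm0 M \/ q = tm0 M.
Proof.
split=> [Hpq|Hpq]; last first.
  apply/tm_eq0P => m; rewrite fsfunE; case: ifP => // _.
  apply/big_tadd_eqNone => x _ _; apply/big_tadd_eqNone => y _ _.
  by apply/tmul_eqNone; case: Hpq => ->; rewrite tm0E; [left|right].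
have [->|/eqP/tm_neq0P[x x_supp px]] := eqVneq p (tm0 M); first by left.
have [->|/eqP/tm_neq0P[y y_supp qy]] := eqVneq q (tm0 M); first by right.
exfalso.
have /(f_equal (fun r : TM M => r (op x y))) := Hpq.
rewrite tm0E fsfunE in_imfset2 // => /big_tadd_eqNone/(_ x x_supp isT).
by move/big_tadd_eqNone/(_ y y_supp (eqxx _))/tmul_eqNone => -[].
Qed.

Lemma tm1_neq0 : tm1 e <> tm0 M.
Proof. by move/tm_eq0P/(_ e); rewrite fsfunE in_fset1 eqxx. Qed.

Lemma tmexp_eq0 (p : TM M) (n : nat) : tmexp op p n = tm0 M -> p = tm0 M.
Proof. by elim: n => [/tm1_neq0 //|n IHn] /tmmul_eq0[|/IHn]. Qed.

Lemma cong_gen_eq0 (R0 : TM M -> TM M -> Prop) :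
  (forall p q, R0 p q -> (p = tm0 M <-> q = tm0 M)) ->
  forall p q, cong_gen op R0 p q -> (p = tm0 M <-> q = tm0 M).
Proof.
move=> HR0 p q; elim=> {p q} [p q /HR0 //|p //|p q _|p q r _ ? _||]; try tauto.
- by move=> p q r s _ ? _ ?; rewrite !tmadd_eq0; tauto.
- by move=> p q r s _ ? _ ?; rewrite !tmmul_eq0; tauto.
Qed.

End TropicalMonoidSemiring.

Section Tropicalization.
Local Open Scope ring_scope.
Variables (M : choiceType) (e : M) (op : Monoid.com_law e).
Variables (K : fieldType) (v : K -> trop).
Hypothesis v_valuation : valuation v.

Lemma valuation_eqNone (a : K) : v a = None <-> a = 0.
Proof. by case: v_valuation. Qed.

Lemma tropfE (f : KM M K) (m : M) : tropf v f m = v (f m).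
Proof.
rewrite fsfunE mem_finsupp; case: eqP => // ->.
exact/esym/valuation_eqNone.
Qed.

Lemma tropf_neq0 (f : KM M K) (i : M) : i \in finsupp f -> tropf v f <> tm0 M.
Proof.
rewrite mem_finsupp => fi_neq0 /tm_eq0P/(_ i).
by rewrite tropfE => /valuation_eqNone/eqP; apply/negP.
Qed.

Lemma tropf_without_eq0 (f : KM M K) (i : M) :
  i \in finsupp f -> tropf_without v f i = tm0 M -> finsupp f = [fset i].
Proof.
move=> i_supp /tm_eq0P f_without0; apply/fsetP => m; rewrite in_fset1.
case: eqP => [-> //|/eqP m_neq_i]; apply/negP => m_supp.
move: (f_without0 m); rewrite fsfunE in_fsetD1 m_neq_i m_supp.
by move/valuation_eqNone/eqP; apply/negP; rewrite -mem_finsupp.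
Qed.

Definition kmC (a : K) : KM M K := [fsfun x in [fset e] => a].

Lemma finsupp_kmC (a : K) : a != 0 -> finsupp (kmC a) = [fset e].
Proof.
move=> a_neq0; apply/fsetP => x; rewrite mem_finsupp fsfunE in_fset1.
by case: (x == e); rewrite ?eqxx.
Qed.

Lemma kmmul_inv_monomial (f : KM M K) (i : M) :
  finsupp f = [fset i] -> kmmul op (kmC (f i)^-1) f = kmono K i.
Proof.
move=> f_supp; have fi_neq0 : f i != 0 by rewrite -mem_finsupp f_supp fset11.
apply/fsfunP => m; rewrite !fsfunE finsupp_kmC ?invr_eq0 // f_supp.
rewrite big_seq_fset1 big_mkcond big_seq_fset1 /= Monoid.mul1m fsfunE in_fset1 eqxx.
rewrite (_ : [fset op x y | x in [fset e], y in [fset i]] = [fset i]).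
  by rewrite in_fset1 eq_sym; case: eqP => // _; rewrite mulVf.
apply/fsetP => x; apply/imfset2P/idP; rewrite in_fset1.
- by case=> y /fset1P-> [z /fset1P-> ->]; rewrite Monoid.mul1m.
- by move/eqP->; exists e; rewrite ?fset11 //; exists i; rewrite ?fset11 ?Monoid.mul1m.
Qed.

Variable I : KM M K -> Prop.
Hypotheses (I_ideal : km_ideal op I) (I_monomial_free : forall m, ~ I (kmono K m)).

Lemma ideal_finsupp_neq1 (f : KM M K) (i : M) : I f -> finsupp f != [fset i].
Proof.
move=> If; apply/eqP => f_supp; apply: (I_monomial_free (m := i)).
by rewrite -(kmmul_inv_monomial f_supp); case: I_ideal => _ _; apply.
Qed.

Lemma bend_rel_neq0 (p q : TM M) : bend_rel v I p q -> p <> tm0 M /\ q <> tm0 M.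
Proof.
case=> f [i [If i_supp -> ->]]; split; first exact: tropf_neq0 i_supp.
by move/(tropf_without_eq0 i_supp)/eqP; apply/negP/ideal_finsupp_neq1.
Qed.

Lemma trop_eq_eq0 (p q : TM M) : trop_eq op v I p q -> (p = tm0 M <-> q = tm0 M).
Proof.
by apply: cong_gen_eq0 => {}p {}q /bend_rel_neq0; tauto.
Qed.

End Tropicalization.

Theorem proposition5p8 (K : fieldType) (v : K -> trop)
  (M : choiceType) (e : M) (op : Monoid.com_law e)
  (I : KM M K -> Prop) :
  valuation v ->
  km_ideal op I ->
  (forall m : M, ~ I (kmono K m)) ->
  (forall p q : TM M,
      trop_eq op v I (tmmul op p q) (tm0 M) ->
      trop_eq op v I p (tm0 M) \/ trop_eq op v I q (tm0 M)) /\
  (forall p q : TM M,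
      (exists n : nat, trop_eq op v I (tmexp op (tmmul op p q) n) (tm0 M)) ->
      (exists n : nat, trop_eq op v I (tmexp op p n) (tm0 M)) \/
      (exists n : nat, trop_eq op v I (tmexp op q n) (tm0 M))).
Proof.
move=> v_valuation I_ideal I_monomial_free.
have related0_eq0 p : trop_eq op v I p (tm0 M) -> p = tm0 M.
  by move/(trop_eq_eq0 v_valuation I_ideal I_monomial_free) => [_]; apply.
have eq0_related0 p : p = tm0 M -> trop_eq op v I p (tm0 M).
  by move->; apply: cg_refl.
split=> p q; first by move/related0_eq0/tmmul_eq0 => [] /eq0_related0; [left|right].
case=> n /related0_eq0/tmexp_eq0/tmmul_eq0[p_eq0|q_eq0]; [left|right];
  by exists 1%N; apply/eq0_related0/tmmul_eq0; left.
Qed.
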